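(* Let $n\ge2$ be an integer and $\lambda\in(2n-1,2n)$. Let $\phi:[0,1]\to[0,1]$ be non-increasing with $\phi(0)=1$, continuous on $[0,1]$, differentiable on $(0,1)$, non-vanishing on $(0,1)$, and such that $\phi'/\phi$ is non-increasing on $(0,1)$. Then the function $p_0:[0,n-1]\to\mathbb{R}$, \[ p_0(l)=\frac{\phi\left(\frac{2l+1}{\lambda}\right)}{\phi\left(\frac{2l}{\lambda}\right)}, \] is non-increasing.
   Context: ''Decreasing'' in the paper is used in the wide sense (non-increasing). *)

From HB Require Import structures.
From mathcomp Require Import all_boot all_order all_algebra.
From mathcomp Require Import all_classical all_reals all_analysis.
Set Implicit Arguments. Unset Strict Implicit. Unset Printing Implicit Defensive.
Import Order.TTheory GRing.Theory Num.Theory.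
Import numFieldNormedType.Exports.
Local Open Scope ring_scope.
Local Open Scope classical_set_scope.

Definition p0 (R : realType) (phi : R -> R) (lambda l : R) : R :=
  phi ((2 * l + 1) / lambda) / phi ((2 * l) / lambda).

(* With h = 1/lambda we have p0 l = F (2 l / lambda) for the shift ratio
   F x = phi (x + h) / phi x.  Its logarithmic derivative is
   (phi'/phi) (x + h) - (phi'/phi) x <= 0, so F is non-increasing as long as
   x + h < 1, and lambda > 2n - 1 says exactly that the largest argument
   2 (n - 1) / lambda still satisfies this. *)
From HB Require Import structures.
From mathcomp Require Import all_boot all_order all_algebra.
From mathcomp Require Import all_classical all_reals all_analysis.
From mathcomp Require Import ring lra.
Import Order.TTheory GRing.Theory Num.Theory.
Import numFieldNormedType.Exports.
Local Open Scope ring_scope.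
Local Open Scope classical_set_scope.

Section ShiftRatio.
Context {R : realType}.
Variables (f : R -> R) (h : R).

Definition shift_ratio (x : R) : R := f (x + h) / f x.

Lemma shift_ratioE : shift_ratio = (f \o shift h) * (fun y => (f y)^-1).
Proof. by apply/funext. Qed.

Lemma derivable_comp_shift x :
  derivable f (x + h) 1 -> derivable (f \o shift h) x 1.
Proof.
move=> /derivable1_diffP dfxh; apply/derivable1_diffP.
apply: (differentiable_comp (f := shift h)) dfxh.
exact/derivable1_diffP.
Qed.

Lemma derive1_comp_shift x :
  derivable f (x + h) 1 -> derive1 (f \o shift h) x = derive1 f (x + h).
Proof.
move=> dfxh; have ds : derivable (shift h) x 1 by [].
rewrite (derive1_comp ds dfxh) [(shift h)^`() x]derive1E.
by rewrite derive_val addr0 mulr1.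
Qed.

Lemma derivable_shift_ratio x : f x != 0 ->
  derivable f x 1 -> derivable f (x + h) 1 -> derivable shift_ratio x 1.
Proof.
move=> fx0 dfx dfxh; rewrite shift_ratioE.
by apply: derivableM; [exact: derivable_comp_shift | exact: derivableV].
Qed.

Lemma derive1_shift_ratio x : f x != 0 -> f (x + h) != 0 ->
  derivable f x 1 -> derivable f (x + h) 1 ->
  derive1 shift_ratio x =
    shift_ratio x * (derive1 f (x + h) / f (x + h) - derive1 f x / f x).
Proof.
move=> fx0 fxh0 dfx dfxh.
rewrite {1}shift_ratioE derive1E deriveM; last 2 first.
- exact: derivable_comp_shift.
- exact: derivableV.
rewrite deriveV // -!derive1E derive1_comp_shift // /shift_ratio /=.
by rewrite -![_ *: _]/(_ * _); field; apply/andP.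
Qed.

Lemma shift_ratio_nonincreasing a b : 0 < h ->
  {within `[a, b], continuous f} ->
  (forall x, a < x < b -> derivable f x 1) ->
  (forall x, a <= x < b -> 0 < f x) ->
  (forall x y, a < x -> x <= y -> y < b ->
     derive1 f y / f y <= derive1 f x / f x) ->
  forall x y, a <= x -> x <= y -> y + h < b -> shift_ratio y <= shift_ratio x.
Proof.
move=> h0 fcont fder fpos flog x y ax xy yhb.
have [ay|ya] := ltP a y; last by have -> : x = y by lra.
have fpos' z : a <= z -> z < b -> 0 < f z by move=> az zb; apply/fpos/andP.
have fder' z : a < z -> z < b -> derivable f z 1 by move=> az zb; apply/fder/andP.
have ratio_der z : a < z -> z + h < b ->
    derivable shift_ratio z 1 /\ derive1 shift_ratio z <= 0.
  move=> az zhb.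
  have [fz fzh] : 0 < f z /\ 0 < f (z + h) by split; apply: fpos'; lra.
  have [dfz dfzh] : derivable f z 1 /\ derivable f (z + h) 1.
    by split; apply: fder'; lra.
  split; first by apply: derivable_shift_ratio; rewrite // gt_eqF.
  rewrite derive1_shift_ratio ?gt_eqF // pmulr_rle0 ?divr_gt0 // subr_le0.
  by apply: flog; lra.
have ratio_cont z : a < z -> z + h < b -> shift_ratio @ z --> shift_ratio z.
  move=> az zhb; apply/differentiable_continuous/derivable1_diffP.
  exact: (ratio_der z az zhb).1.
have ratio_cvg_a : shift_ratio @ a^'+ --> shift_ratio a.
  have [_ fa _] := (continuous_within_itvP f (ltac:(lra) : a < b)).1 fcont.
  have fsa : (f \o shift h) @ a^'+ --> (f \o shift h) a.
    apply: cvg_at_right_filter; apply/differentiable_continuous/derivable1_diffP.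
    by apply/derivable_comp_shift/fder'; lra.
  have fa0 : f a != 0 by rewrite gt_eqF // fpos' //; lra.
  exact: cvgM fsa (cvgV fa0 fa).
have xI : x \in `[a, y]%R by rewrite in_itv /= ax xy.
have yI : y \in `[a, y]%R by rewrite in_itv /= lexx ltW.
apply: (ler0_derive1_le_cc _ _ _ yI xI xy).
- by move=> z; rewrite in_itv /= => /andP[az zy]; apply: (ratio_der z az _).1; lra.
- by move=> z; rewrite in_itv /= => /andP[az zy]; apply: (ratio_der z az _).2; lra.
- apply/continuous_within_itvP => //; split => //.
  + by move=> z; rewrite in_itv /= => /andP[az zy]; apply: ratio_cont; lra.
  + by apply: cvg_at_left_filter; apply: ratio_cont; lra.
Qed.

End ShiftRatio.

Lemma p0_shift_ratio (R : realType) (phi : R -> R) (lambda l : R) :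
  p0 phi lambda l = shift_ratio phi lambda^-1 (2 * l / lambda).
Proof. by rewrite /p0 /shift_ratio mulrDl mul1r. Qed.

Theorem mainTheorem13 (R : realType) (n : nat) (lambda : R) (phi : R -> R)
  (hn : (2 <= n)%N)
  (hlam : 2 * n%:R - 1 < lambda /\ lambda < 2 * n%:R)
  (hrange : forall x : R, 0 <= x <= 1 -> 0 <= phi x <= 1)
  (hnoninc : forall x y : R, 0 <= x -> x <= y -> y <= 1 -> phi y <= phi x)
  (h0 : phi 0 = 1)
  (hcont : {within `[0, 1], continuous phi})
  (hder : forall x : R, 0 < x < 1 -> derivable phi x 1)
  (hnz : forall x : R, 0 < x < 1 -> phi x != 0)
  (hlog : forall x y : R, 0 < x -> x <= y -> y < 1 ->
            (derive1 phi y) / phi y <= (derive1 phi x) / phi x) :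
  forall l1 l2 : R, 0 <= l1 -> l1 <= l2 -> l2 <= n%:R - 1 ->
    p0 phi lambda l2 <= p0 phi lambda l1.
Proof.
move=> l1 l2 l10 l12 l2n; case: hlam => hl1 _.
have n2 : (2 : R) <= n%:R by rewrite (ler_nat R 2 n).
have lam0 : 0 < lambda by lra.
have phi_pos x : 0 <= x < 1 -> 0 < phi x.
  case/andP=> x0 x1; have [<-|x0'] := eqVneq 0 x; first by rewrite h0.
  have /andP[phix0 _] := hrange x ltac:(apply/andP; split; lra).
  by rewrite lt_def phix0 hnz // lt_def eq_sym x0' x0.
rewrite !p0_shift_ratio.
apply: (shift_ratio_nonincreasing phi _ 0 1) => //.
- by rewrite invr_gt0.
- by rewrite divr_ge0 //; lra.
- by rewrite ler_pM2r ?invr_gt0 //; lra.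
- by rewrite -[X in _ + X]mul1r -mulrDl ltr_pdivrMr // mul1r; lra.
Qed.
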